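(* Let $\Omega$ be a triangulation whose edges are labeled as terminal-, internal- and frontier-edges, and let $R$ be a terminal-edge region of $\Omega$. Apply the polygon construction (traversal) procedure starting from a seed triangle of $R$. During this procedure, each triangle of $R$ is visited at most $3$ times.
   Context: Let $\Omega$ be a triangulation in which every triangle has a designated unique longest edge (ties between equal-length edges are broken arbitrarily but consistently). Edges are labeled as follows. An edge shared by two triangles is: - a terminal-edge if it is the longest edge of both triangles; - a frontier-edge if it is the longest edge of neither triangle; - an internal-edge otherwise. Edges belonging to a single triangle are boundary edges and are treated as frontier-edges. For a triangle $t_0$, $\mathrm{Lepp}(t_0)$ is the sequence $t_0,t_1,\dots$ in which each $t_i$ is the neighbor of $t_{i-1}$ across the longest edge of $t_{i-1}$, ending at a terminal (or boundary) edge. A terminal-edge region is the union of all triangles whose Lepp ends at the same terminal-edge. It is bounded by frontier-edges, and its triangles are connected to each other across internal-edges (and terminal-edges). The polygon construction procedure builds the boundary polygon of $R$ as a counter-clockwise list of frontier-edge vertices. It starts from a seed triangle $t$ of $R$: - If $t$ has 3 frontier-edges, $t$ itself is the polygon. - Otherwise the frontier-edges of $t$ (if any) are appended in counter-clockwise order. The initial vertex $v_{init}$ and the current endpoint $v_{end}$ are recorded (if $t$ has no frontier-edge, both are set to an arbitrary vertex of $t$). The procedure then repeatedly moves from the current triangle to a neighboring triangle $t'$ of $R$, always across a non-frontier edge (an internal-edge), choosing the neighbor that contains $v_{end}$: - If $t'$ has one frontier-edge incident to $v_{end}$, that edge is appended, $v_{end}$ is updated to its other endpoint, and the procedure moves to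 the not-previously-visited internal-edge neighbor containing $v_{end}$. - If $t'$ has two frontier-edges, both are appended, $v_{end}$ is updated, and the procedure returns to the previously visited triangle. - If $t'$ has no frontier-edge, the procedure moves to the internal-edge neighbor, in counter-clockwise order, that contains $v_{end}$. The procedure stops when $v_{end}=v_{init}$ and the walk returns to the starting triangle. Each move into a triangle counts as one visit of that triangle. *)

From mathcomp Require Import all_boot all_order all_algebra.
Set Implicit Arguments. Unset Strict Implicit. Unset Printing Implicit Defensive.
Import Order.TTheory GRing.Theory Num.Theory.

Local Open Scope ring_scope.

(* twice the signed area of (p,q,r); > 0 iff p,q,r is counter-clockwise *)
Definition orient (R : numDomainType) (p q r : R * R) : R :=
  (q.1 - p.1) * (r.2 - p.2) - (q.2 - p.2) * (r.1 - p.1).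

Definition len2 (R : numDomainType) (p q : R * R) : R :=
  (p.1 - q.1) ^+ 2 + (p.2 - q.2) ^+ 2.

Local Close Scope ring_scope.

(* ---------- triangles: tv t i (i : 'I_3) are the vertices of t in ccw order;
   edge i of t goes from tv t i to tv t (nxt i) ---------- *)
Definition nxt (i : 'I_3) : 'I_3 := ordS i.
Definition prv (i : 'I_3) : 'I_3 := ord_pred i.

Definition ccw_tri (R : numDomainType) (V T : Type) (pos : V -> R * R)
  (tv : T -> 'I_3 -> V) (t : T) : bool :=
  (0 < orient (pos (tv t ord0)) (pos (tv t (nxt ord0))) (pos (tv t (nxt (nxt ord0)))))%R.

Definition inside_tri (R : numDomainType) (V T : Type) (pos : V -> R * R)
  (tv : T -> 'I_3 -> V) (t : T) (q : R * R) : bool :=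
  [&& (0 < orient (pos (tv t ord0)) (pos (tv t (nxt ord0))) q)%R,
      (0 < orient (pos (tv t (nxt ord0))) (pos (tv t (nxt (nxt ord0)))) q)%R &
      (0 < orient (pos (tv t (nxt (nxt ord0)))) (pos (tv t ord0)) q)%R].

Definition same_edge (V : eqType) (a b c d : V) : bool :=
  ((a == c) && (b == d)) || ((a == d) && (b == c)).

Section Labels.
Context {V : eqType} {T : finType} (tv : T -> 'I_3 -> V) (lg : T -> 'I_3).
(* lg t = index of the designated longest edge of t *)

Definition has_edge (t : T) (u w : V) : bool :=
  [exists i : 'I_3, same_edge (tv t i) (tv t (nxt i)) u w].

Definition is_longest (t : T) (u w : V) : bool :=
  same_edge (tv t (lg t)) (tv t (nxt (lg t))) u w.

Definition boundary (t : T) (i : 'I_3) : bool :=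
  [forall t' : T, (t' != t) ==> ~~ has_edge t' (tv t i) (tv t (nxt i))].

Definition frontier (t : T) (i : 'I_3) : bool :=
  boundary t i ||
  [exists t' : T, [&& t' != t, has_edge t' (tv t i) (tv t (nxt i)),
                      lg t != i & ~~ is_longest t' (tv t i) (tv t (nxt i))]].

Definition terminal (t : T) (i : 'I_3) : bool :=
  [exists t' : T, [&& t' != t, has_edge t' (tv t i) (tv t (nxt i)),
                      lg t == i & is_longest t' (tv t i) (tv t (nxt i))]].

(* lepp_ends t u w : Lepp(t) ends at the edge {u,w} (a terminal edge or a
   boundary longest edge) *)
Inductive lepp_ends : T -> V -> V -> Prop :=
| lepp_stop t u w :
    same_edge (tv t (lg t)) (tv t (nxt (lg t))) u w ->
    boundary t (lg t) || terminal t (lg t) ->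
    lepp_ends t u w
| lepp_next t t' u w :
    ~~ boundary t (lg t) -> ~~ terminal t (lg t) ->
    t' != t -> has_edge t' (tv t (lg t)) (tv t (nxt (lg t))) ->
    lepp_ends t' u w -> lepp_ends t u w.

(* ---------- polygon construction walk ----------
   State (t, i): current triangle t, current endpoint v_end = tv t i.
   One step: if the ccw edge of t leaving v_end is a frontier-edge it is
   appended and v_end advances along it; otherwise the walk moves across
   that (non-frontier) edge into the neighbouring triangle, keeping v_end. *)
Definition step (s : T * 'I_3) : T * 'I_3 :=
  let: (t, i) := s in
  if frontier t i then (t, nxt i) else
  match [pick t' | (t' != t) && has_edge t' (tv t i) (tv t (nxt i))] with
  | Some t' => (t', odflt i [pick j | tv t' j == tv t i])
  | None => (t, nxt i)
  end.

Definition crosses (s : T * 'I_3) : bool := ~~ frontier s.1 s.2.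

Definition walk (s0 : T * 'I_3) (k : nat) : T * 'I_3 := iter k step s0.

Definition visits (s0 : T * 'I_3) (t : T) (k : nat) : nat :=
  \sum_(0 <= j < k) (crosses (walk s0 j) && ((walk s0 j.+1).1 == t)).

End Labels.

From mathcomp Require Import all_boot all_order all_algebra.
From mathcomp Require Import ring.

(* The walk acts on states (t, i), meaning "current triangle t, v_end = tv t i",
   and its step map is injective: advancing along a frontier-edge is undone by
   going back one vertex, and crossing an internal edge is undone by crossing it
   again, since the neighbour holds that edge with reversed orientation and an
   edge is a frontier-edge of one side iff it is one of the other.  Hence, until
   the walk returns to its starting state, all states it reaches are distinct.
   Every move into t lands in one of the three states (t, i), so t is entered at
   most three times. *)

Set Implicit Arguments. Unset Strict Implicit. Unset Printing Implicit Defensive.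
Import Order.TTheory.

Lemma ord3P (i : 'I_3) : i = ord0 \/ i = nxt ord0 \/ i = nxt (nxt ord0).
Proof. by case: i => [[|[|[|m]]] Hi] //; [left | right; left | right; right]; apply: val_inj. Qed.

Lemma nxt_inj : injective nxt.
Proof. exact: ordS_inj. Qed.

Lemma nxt2_neq (i : 'I_3) : nxt (nxt i) != i.
Proof. by case: (ord3P i) => [->|[->|->]]. Qed.

Lemma ccw_tri_inj (R : numDomainType) (V : eqType) (T : Type) (pos : V -> R * R)
  (tv : T -> 'I_3 -> V) (t : T) : ccw_tri pos tv t -> injective (tv t).
Proof.
rewrite /ccw_tri.
set a := tv t ord0; set b := tv t (nxt ord0); set c := tv t (nxt (nxt ord0)).
have orient_pp (p q : R * R) : orient p p q = 0%R by rewrite /orient; ring.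
have orient_qq (p q : R * R) : orient p q q = 0%R by rewrite /orient; ring.
have orient_pqp (p q : R * R) : orient p q p = 0%R by rewrite /orient; ring.
move=> ccw.
have ab : a != b by apply/eqP=> E; move: ccw; rewrite E orient_pp ltxx.
have bc : b != c by apply/eqP=> E; move: ccw; rewrite E orient_qq ltxx.
have ac : a != c by apply/eqP=> E; move: ccw; rewrite E orient_pqp ltxx.
move=> i j.
case: (ord3P i) => [->|[->|->]]; case: (ord3P j) => [->|[->|->]] //;
  rewrite -/a -/b -/c => E; move: ab bc ac; rewrite E eqxx //= ?andbF.
Qed.

Lemma iter_neq_before_return (X : eqType) (f : X -> X) (x : X) (k : nat) :
  injective f -> (forall j, 0 < j < k -> iter j f x != x) ->
  forall a b, a < b < a + k -> iter a f x != iter b f x.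
Proof.
move=> f_inj no_return a b /andP[ab bak]; apply/eqP => E.
have iter_inj n : injective (iter n f) by elim: n => [|n IH] y z //= /f_inj /IH.
have /no_return : 0 < b - a < k by rewrite subn_gt0 ab ltn_subLR // ltnW.
by rewrite -(subnKC (ltnW ab)) iterD in E; rewrite -(iter_inj _ _ _ E) eqxx.
Qed.

Section PolygonWalk.

Variables (V : eqType) (T : finType) (tv : T -> 'I_3 -> V) (lg : T -> 'I_3).
Hypothesis tv_inj : forall t, injective (tv t).
Hypothesis tv_conforming : forall t t' i i',
  tv t i = tv t' i' -> tv t (nxt i) = tv t' (nxt i') -> t = t'.

Lemma has_edge_reversed t t' i : t' != t -> has_edge tv t' (tv t i) (tv t (nxt i)) ->
  exists j, tv t' j = tv t (nxt i) /\ tv t' (nxt j) = tv t i.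
Proof.
move=> t't /existsP[j]; case/orP => /andP[/eqP e1 /eqP e2]; last by exists j.
by move: t't; rewrite (tv_conforming e1 e2) eqxx.
Qed.

Lemma edge_neighbour_unique t t1 t2 i : t1 != t -> t2 != t ->
  has_edge tv t1 (tv t i) (tv t (nxt i)) ->
  has_edge tv t2 (tv t i) (tv t (nxt i)) -> t1 = t2.
Proof.
move=> t1t t2t /(has_edge_reversed t1t)[j1 [a1 b1]] /(has_edge_reversed t2t)[j2 [a2 b2]].
by apply: (tv_conforming (i := j1) (i' := j2)); rewrite ?a1 ?a2 ?b1 ?b2.
Qed.

Lemma step_frontier t i : frontier tv lg t i -> step tv lg (t, i) = (t, nxt i).
Proof. by rewrite /step => ->. Qed.

Lemma step_cross t i : ~~ frontier tv lg t i ->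
  exists t' j, [/\ step tv lg (t, i) = (t', nxt j), t' != t,
                   tv t' j = tv t (nxt i) & tv t' (nxt j) = tv t i].
Proof.
move=> nf; have := nf; rewrite /frontier negb_or => /andP[not_bd _].
rewrite /step (negbTE nf).
case: pickP => [t1 /andP[t1t e1] | no_nb]; last first.
  move: not_bd => /forallPn[t1]; rewrite negb_imply negbK => /andP[t1t e1].
  by move: (no_nb t1); rewrite t1t e1.
have [j [a b]] := has_edge_reversed t1t e1.
case: pickP => [j' /eqP Hj' | no_vertex]; last by move: (no_vertex (nxt j)); rewrite b eqxx.
by exists t1, j; split => //; congr pair; apply: (tv_inj (t := t1)); rewrite Hj' b.
Qed.

Lemma frontier_reversed t t' i j : frontier tv lg t i -> t' != t ->
  tv t' j = tv t (nxt i) -> tv t' (nxt j) = tv t i -> frontier tv lg t' j.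
Proof.
move=> F t't a b.
have e' : has_edge tv t' (tv t i) (tv t (nxt i)).
  by apply/existsP; exists j; rewrite /same_edge a b !eqxx orbT.
case/orP: F => [/forallP/(_ t')|]; first by rewrite t't e'.
case/existsP=> t1 /and4P[t1t e1 lg_t not_lg_t1].
have E := edge_neighbour_unique t1t t't e1 e'; subst t1.
apply/orP; right; apply/existsP; exists t; rewrite eq_sym t't /=.
apply/and3P; split.
- by apply/existsP; exists i; rewrite /same_edge a b !eqxx orbT.
- by apply/eqP=> L; move: not_lg_t1; rewrite /is_longest L a b /same_edge !eqxx orbT.
- rewrite /is_longest a b /same_edge; apply/negP.
  case/orP => /andP[/eqP/tv_inj E1 /eqP/tv_inj E2].
  + by move: (nxt2_neq i); rewrite -E1 E2 eqxx.
  + by move: lg_t; rewrite E1 eqxx.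
Qed.

Lemma step_inj : injective (step tv lg).
Proof.
move=> [t i] [t2 i2].
case F1: (frontier tv lg t i); case F2: (frontier tv lg t2 i2).
- by rewrite !step_frontier // => /pair_equal_spec[-> /nxt_inj ->].
- have [t' [j [-> t't a b]]] := step_cross (negbT F2).
  rewrite step_frontier // => /pair_equal_spec[E1 /nxt_inj E2]; subst t' j.
  by move: F2; rewrite (frontier_reversed F1 _ (esym b) (esym a)) // eq_sym.
- have [t' [j [-> t't a b]]] := step_cross (negbT F1).
  rewrite step_frontier // => /pair_equal_spec[E1 /nxt_inj E2]; subst t' j.
  by move: F1; rewrite (frontier_reversed F2 _ (esym b) (esym a)) // eq_sym.
- have [t' [j [-> _ a b]]] := step_cross (negbT F1).
  have [t2' [j2 [-> _ a2 b2]]] := step_cross (negbT F2).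
  move/pair_equal_spec=> [E1 /nxt_inj E2]; subst t2' j2.
  have Et : t = t2 by apply: (tv_conforming (i := i) (i' := i2)); rewrite -?a -?b ?a2 ?b2.
  by subst t2; congr pair; apply: (tv_inj (t := t)); rewrite -b b2.
Qed.

Lemma visits_le_entries s0 t k :
  visits tv lg s0 t k <= #|[pred j : 'I_k | (walk tv lg s0 j.+1).1 == t]|.
Proof.
rewrite /visits big_mkord -sum1_card [X in _ <= X]big_mkcond /=.
by apply: leq_sum => j _; rewrite inE; case: (crosses _); case: (_ == t).
Qed.

Lemma visits_le3 s0 t k :
  (forall j, 0 < j < k -> walk tv lg s0 j != s0) -> visits tv lg s0 t k <= 3.
Proof.
move=> no_return; apply: leq_trans (visits_le_entries s0 t k) _.
have walk_neq (a b : 'I_k) : a < b -> walk tv lg s0 a.+1 != walk tv lg s0 b.+1.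
  move=> ab; apply: (iter_neq_before_return step_inj no_return).
  by rewrite ltnS ab addSn ltnS (leq_trans (ltn_ord b) (leq_addl a k)).
suff entry_inj : {in [pred j : 'I_k | (walk tv lg s0 j.+1).1 == t] &,
    injective (fun j : 'I_k => (walk tv lg s0 j.+1).2)}.
  by have := leq_card_in _ _ entry_inj; rewrite card_ord.
move=> a b; rewrite !inE => /eqP Ha /eqP Hb E.
have same_state : walk tv lg s0 a.+1 = walk tv lg s0 b.+1.
  by rewrite [LHS]surjective_pairing [RHS]surjective_pairing Ha Hb E.
case: (ltngtP a b) => [ab | ba | /val_inj //].
- by move: (walk_neq _ _ ab); rewrite same_state eqxx.
- by move: (walk_neq _ _ ba); rewrite same_state eqxx.
Qed.

End PolygonWalk.

Theorem lemma1 (R : realFieldType) (V T : finType) (pos : V -> R * R)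
  (tv : T -> 'I_3 -> V) (lg : T -> 'I_3) (rk : V -> V -> nat)
  (* Omega is a (consistently ccw-oriented, conforming) triangulation *)
  (Hccw : forall t, ccw_tri pos tv t)
  (Hdir : forall t t' i i', tv t i = tv t' i' ->
            tv t (nxt i) = tv t' (nxt i') -> t = t')
  (Hdisj : forall t t' q, inside_tri pos tv t q -> inside_tri pos tv t' q -> t = t')
  (* designated unique longest edge, ties broken consistently by rank rk *)
  (Hrk_sym : forall a b, rk a b = rk b a)
  (Hrk_inj : forall a b c d, rk a b = rk c d -> same_edge a b c d)
  (Hrk_len : forall a b c d,
      (len2 (pos a) (pos b) < len2 (pos c) (pos d))%R -> rk a b < rk c d)
  (Hlg : forall t i, i != lg t ->
      rk (tv t i) (tv t (nxt i)) < rk (tv t (lg t)) (tv t (nxt (lg t))))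
  (* R = terminal-edge region of edge {u,w}; seed triangle in R *)
  (u w : V) (seed : T) (i0 : 'I_3)
  (Hseed : lepp_ends tv lg seed u w)
  (* v_init = tv seed i0: start of the ccw run of frontier-edges of seed
     (arbitrary if seed has no frontier-edge or only frontier-edges) *)
  (Hi0 : (exists j, frontier tv lg seed j) -> (exists j, ~~ frontier tv lg seed j) ->
         frontier tv lg seed i0 && ~~ frontier tv lg seed (prv i0)) :
  forall (t : T) (k : nat),
    lepp_ends tv lg t u w ->
    (* the procedure has not stopped before step k *)
    (forall j, 0 < j < k -> walk tv lg (seed, i0) j != (seed, i0)) ->
    visits tv lg (seed, i0) t k <= 3.
Proof.
(* Only the conformity and orientation of the triangulation matter: the bound
   holds for every triangle, not just those of the region. *)
move=> t k _ no_return.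
have tv_inj t' : injective (tv t') := ccw_tri_inj (Hccw t').
exact: (visits_le3 tv_inj Hdir) no_return.
Qed.
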